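(* Let $A,B$ be non-empty compact subsets of $\mathbb{R}$. Then $\max\{\dim_HA,\dim_HB\}\le\dim_H\Lambda(A,B)$, where $\Lambda(A,B)\subseteq\mathbb{R}^2$ carries the Euclidean metric.
   Context: $\dim_H$ is Hausdorff dimension. For $b\in\mathbb{R}$, $\Lambda_A(b)=\{a\in A:|b-a|=\min_{a'\in A}|b-a'|\}$; the set of metric pairs is $\Lambda(A,B)=\{(a,b)\in A\times B:a\in\Lambda_A(b)\text{ or }b\in\Lambda_B(a)\}$. *)

From HB Require Import structures.
From mathcomp Require Import all_boot all_order all_algebra.
From mathcomp Require Import all_classical all_reals all_analysis.
Set Implicit Arguments. Unset Strict Implicit. Unset Printing Implicit Defensive.
Import Order.TTheory GRing.Theory Num.Theory.
Import numFieldNormedType.Exports.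
Local Open Scope classical_set_scope.
Local Open Scope ring_scope.

Section Hausdorff.
Variables (R : realType) (T : Type) (d : T -> T -> R).

Definition diam (E : set T) : \bar R :=
  ereal_sup ([set 0%:E] `|` [set (d x y)%:E | x in E & y in E]).

(* the summand |F|^s of a cover, with the convention |set0|^s = 0
   (and |F|^0 = 1 for non-empty F, since 0 `^ 0 = 1) *)
Definition cover_term (s : R) (F : set T) : \bar R :=
  if `[< F = set0 >] then 0%E else ((fine (diam F)) `^ s)%:E.

Definition hausdorff_content (s delta : R) (E : set T) : \bar R :=
  ereal_inf [set (\sum_(0 <= i <oo) cover_term s (F i))%E
            | F in [set F : nat -> set T |
                     E `<=` \bigcup_i F i /\ forall i, (diam (F i) <= delta%:E)%E]].

Definition hausdorff_measure (s : R) (E : set T) : \bar R :=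
  ereal_sup [set hausdorff_content s delta E | delta in [set delta : R | 0 < delta]].

(* Hausdorff dimension: inf { s >= 0 | H^s(E) = 0 } (= +oo if no such s) *)
Definition hausdorff_dim (E : set T) : \bar R :=
  ereal_inf [set s%:E | s in [set s : R | 0 <= s /\ hausdorff_measure s E = 0%E]].

End Hausdorff.

Definition dist1 {R : realType} (x y : R) : R := `|x - y|.
Definition dist2 {R : realType} (p q : R * R) : R :=
  Num.sqrt ((p.1 - q.1) ^+ 2 + (p.2 - q.2) ^+ 2).

Notation dimH1 := (hausdorff_dim dist1).
Notation dimH2 := (hausdorff_dim dist2).

Definition nearest {R : realType} (A : set R) (b : R) : set R :=
  [set a | A a /\ forall a', A a' -> `|b - a| <= `|b - a'|].

Definition metric_pairs {R : realType} (A B : set R) : set (R * R) :=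
  [set p | A p.1 /\ B p.2 /\ (nearest A p.2 p.1 \/ nearest B p.1 p.2)].

From HB Require Import structures.
From mathcomp Require Import all_boot all_order all_algebra.
From mathcomp Require Import all_classical all_reals all_analysis.
Set Implicit Arguments.
Unset Strict Implicit.
Unset Printing Implicit Defensive.

Import Order.TTheory GRing.Theory Num.Theory.
Import numFieldNormedType.Exports.
Local Open Scope classical_set_scope.
Local Open Scope ring_scope.

(* A 1-Lipschitz map sends delta-covers to delta-covers with no larger
   summands, so it cannot increase Hausdorff dimension.  Both coordinate
   projections of the plane are 1-Lipschitz, and they map Lambda(A,B) onto A
   and onto B: by compactness every a in A has a nearest point b in B, and then
   (a,b) is a metric pair (symmetrically for B). *)

Lemma diam_ge0 {R : realType} {T : Type} (d : T -> T -> R) (E : set T) :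
  (0 <= diam d E)%E.
Proof. by apply: ereal_sup_ubound; left. Qed.

Lemma cover_term_ge0 {R : realType} {T : Type} (d : T -> T -> R) (s : R)
    (F : set T) :
  (0 <= cover_term d s F)%E.
Proof. by rewrite /cover_term; case: asboolP => // _; rewrite lee_fin powR_ge0. Qed.

Lemma hausdorff_content_ge0 {R : realType} {T : Type} (d : T -> T -> R)
    (s delta : R) (E : set T) :
  (0 <= hausdorff_content d s delta E)%E.
Proof.
apply: le_ereal_inf_tmp => _ [F _ <-].
by apply: nneseries_ge0 => i _ _; exact: cover_term_ge0.
Qed.

Section LipschitzImage.
Variables (R : realType) (X Y : Type) (dX : X -> X -> R) (dY : Y -> Y -> R).
Variable f : Y -> X.
Hypothesis f_1lip : forall x y, dX (f x) (f y) <= dY x y.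

Lemma diam_image_le (F : set Y) : (diam dX (f @` F) <= diam dY F)%E.
Proof.
apply: ge_ereal_sup => z [->|[_ [x Fx <-] [_ [y Fy <-] <-]]].
  exact: diam_ge0.
apply: (@le_trans _ _ (dY x y)%:E); first by rewrite lee_fin.
by apply: ereal_sup_ubound; right; exists x => //; exists y.
Qed.

(* Finiteness of [diam dY F] matters: [cover_term] reads an infinite diameter
   as [fine +oo = 0]. *)
Lemma cover_term_image_le (s : R) (F : set Y) : 0 <= s -> (diam dY F < +oo)%E ->
  (cover_term dX s (f @` F) <= cover_term dY s F)%E.
Proof.
move=> s_ge0 diamF_fin; rewrite /cover_term.
case: (asboolP (F = set0)) => [->|F_neq0]; first by rewrite image_set0 asboolT.
case: asboolP => [/image_set0_set0 //|_].
move: diamF_fin (diam_image_le F) (diam_ge0 dX (f @` F)).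
case: (diam dY F) => [r| |] //; case: (diam dX _) => [r'| |] //=.
rewrite !lee_fin => _ r'_le_r r'_ge0.
by apply: ge0_ler_powR; rewrite ?nnegrE //; exact: le_trans r'_le_r.
Qed.

Lemma hausdorff_content_image_le (s delta : R) (A : set X) (E : set Y) :
  0 <= s -> A `<=` f @` E ->
  (hausdorff_content dX s delta A <= hausdorff_content dY s delta E)%E.
Proof.
move=> s_ge0 AfE; apply: le_ereal_inf_tmp => _ [F [EF diamF] <-].
apply: (@le_trans _ _ (\sum_(0 <= i <oo) cover_term dX s (f @` F i))%E).
  apply: ereal_inf_lbound; exists (fun i => f @` F i) => //; split.
    by move=> x /AfE [y /EF [i _ Fy] <-]; exists i => //; exists y.
  by move=> i; exact: le_trans (diam_image_le _) (diamF i).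
apply: lee_nneseries => [i _ _|i _]; first exact: cover_term_ge0.
by apply: cover_term_image_le => //; exact: le_lt_trans (diamF i) (ltry _).
Qed.

Lemma hausdorff_measure_image_eq0 (s : R) (A : set X) (E : set Y) :
  0 <= s -> A `<=` f @` E ->
  hausdorff_measure dY s E = 0%E -> hausdorff_measure dX s A = 0%E.
Proof.
move=> s_ge0 AfE HE0; apply/eqP; rewrite eq_le; apply/andP; split.
  apply: ge_ereal_sup => _ [delta delta_gt0 <-]; rewrite -HE0.
  apply: le_trans (hausdorff_content_image_le delta s_ge0 AfE) _.
  by apply: ereal_sup_ubound; exists delta.
apply: le_trans (hausdorff_content_ge0 dX s 1 A) _.
by apply: ereal_sup_ubound; exists 1; first exact: ltr01.
Qed.

Lemma hausdorff_dim_image_le (A : set X) (E : set Y) : A `<=` f @` E ->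
  (hausdorff_dim dX A <= hausdorff_dim dY E)%E.
Proof.
move=> AfE; apply: ereal_inf_le_tmp => _ [s [s_ge0 HEs] <-].
by exists s => //; split => //; exact: hausdorff_measure_image_eq0 HEs.
Qed.

End LipschitzImage.

Lemma dist1_fst_le {R : realType} (p q : R * R) : dist1 p.1 q.1 <= dist2 p q.
Proof. by rewrite /dist1 /dist2 -sqrtr_sqr ler_wsqrtr // lerDl sqr_ge0. Qed.

Lemma dist1_snd_le {R : realType} (p q : R * R) : dist1 p.2 q.2 <= dist2 p q.
Proof. by rewrite /dist1 /dist2 -sqrtr_sqr ler_wsqrtr // lerDr sqr_ge0. Qed.

Lemma nearest_exists {R : realType} (B : set R) (a : R) :
  compact B -> B !=set0 -> exists b, nearest B a b.
Proof.
move=> cB B0.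
have dist_a_cont : {within B, continuous (fun b : R => `|a - b|)}.
  apply: continuous_subspaceT => x.
  by apply: cvg_norm; apply: cvgB; [exact: cvg_cst | exact: cvg_id].
have [b /set_mem Bb b_min] := compact_EVT_min B0 cB dist_a_cont.
by exists b; split => // b' Bb'; exact: b_min (mem_set Bb').
Qed.

Lemma metric_pairs_fst_cover {R : realType} (A B : set R) :
  compact B -> B !=set0 -> A `<=` fst @` metric_pairs A B.
Proof.
move=> cB B0 a Aa; have [b [Bb b_min]] := nearest_exists a cB B0.
by exists (a, b) => //; split; [|split; [|right; split]].
Qed.

Lemma metric_pairs_snd_cover {R : realType} (A B : set R) :
  compact A -> A !=set0 -> B `<=` snd @` metric_pairs A B.
Proof.
move=> cA A0 b Bb; have [a [Aa a_min]] := nearest_exists b cA A0.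
by exists (a, b) => //; split; [|split; [|left; split]].
Qed.

Theorem proposition4p1 (R : realType) (A B : set R) :
  compact A -> A !=set0 -> compact B -> B !=set0 ->
  (maxe (dimH1 A) (dimH1 B) <= dimH2 (metric_pairs A B))%E.
Proof.
move=> cA A0 cB B0; rewrite ge_max; apply/andP; split.
- apply: (hausdorff_dim_image_le (@dist1_fst_le R)).
  exact: metric_pairs_fst_cover.
- apply: (hausdorff_dim_image_le (@dist1_snd_le R)).
  exact: metric_pairs_snd_cover.
Qed.
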